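(* There is an absolute constant $C$ such that for every $f:\mathcal X\times\mathcal Y\to\{0,1\}$ and every $\delta\in(0,1/8)$, $\log\mathsf{prt}_\delta(f)\le C\log(1/\delta)\cdot\log\mathsf{prt}_{1/8}(f)$.
   Context: A rectangle is $A\times B$ with $A\subseteq\mathcal X,B\subseteq\mathcal Y$. The partition bound $\mathsf{prt}_\epsilon(f)$ is the optimal value of the LP: minimize $\sum_{z}\sum_R w_{z,R}$ over rectangles $R$ and outputs $z$, subject to $\sum_{R\ni(x,y)}w_{f(x,y),R}\ge1-\epsilon$ for all $(x,y)$; $\sum_{R\ni(x,y)}\sum_z w_{z,R}=1$ for all $(x,y)$; $w_{z,R}\ge0$. Logs base 2. *)

From Stdlib Require Import Reals List.
Open Scope R_scope.

(* Inputs: X = {0,...,nX-1}, Y = {0,...,nY-1}; f : nat -> nat -> bool,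
   only its values on X x Y matter.  A rectangle A x B is given by two
   characteristic predicates A, B : nat -> bool (restricted to X, Y).
   A (finitely supported) LP solution w_{z,R} is a finite list of weighted
   entries (z, A, B, w) meaning weight w on output z and rectangle A x B
   (repetitions add up). *)

Definition entry := (bool * (nat -> bool) * (nat -> bool) * R)%type.

Definition ent_out (e : entry) : bool := let '(z, _, _, _) := e in z.
Definition ent_in (e : entry) (x y : nat) : bool :=
  let '(_, A, B, _) := e in andb (A x) (B y).
Definition ent_w (e : entry) : R := let '(_, _, _, w) := e in w.

Definition sumR (l : list R) : R := fold_right Rplus 0 l.

Definition cover (sol : list entry) (x y : nat) : R :=
  sumR (map ent_w (filter (fun e => ent_in e x y) sol)).

Definition correct (f : nat -> nat -> bool) (sol : list entry) (x y : nat) : R :=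
  sumR (map ent_w (filter (fun e => andb (ent_in e x y)
                                      (Bool.eqb (ent_out e) (f x y))) sol)).

Definition value (sol : list entry) : R := sumR (map ent_w sol).

Definition feasible (eps : R) (nX nY : nat) (f : nat -> nat -> bool)
  (sol : list entry) : Prop :=
  (forall e, In e sol -> 0 <= ent_w e) /\
  (forall x y, (x < nX)%nat -> (y < nY)%nat ->
     correct f sol x y >= 1 - eps /\ cover sol x y = 1).

Definition is_inf (S : R -> Prop) (v : R) : Prop :=
  (forall u, S u -> v <= u) /\ (forall b, (forall u, S u -> b <= u) -> b <= v).

Definition is_prt (eps : R) (nX nY : nat) (f : nat -> nat -> bool) (v : R) : Prop :=
  is_inf (fun u => exists sol, feasible eps nX nY f sol /\ value sol = u) v.

Definition log2 (x : R) : R := ln x / ln 2.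

(* Amplification by independent repetition.  Given a solution that is feasible for error ε,
   take its k-fold tensor power: weight w_1 ... w_k on the rectangle R_1 ∩ ... ∩ R_k, labelled by
   the strict majority of the outputs z_1, ..., z_k.  The cover constraint is preserved (its left
   side is multiplicative) and the value becomes v^k.  At a point, the weight of wrong majorities
   is bounded by the potential w_1 ... w_k 2^(#wrong) 2^(-#right), which is again multiplicative,
   with per-coordinate factor 2·cover - (3/2)·correct <= (1 + 3ε)/2 = 11/16 for ε = 1/8.  Choosing
   k ≈ 2 log(1/δ) and passing to the infimum gives log prt_δ <= k log prt_{1/8}. *)
From Stdlib Require Import Reals List Lra Lia ZArith.
Open Scope R_scope.
Open Scope bool_scope.

Fixpoint lsum {T : Type} (g : T -> R) (l : list T) : R :=
  match l with nil => 0 | a :: l => g a + lsum g l end.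

Lemma sumR_map_lsum {T} (g : T -> R) l : sumR (map g l) = lsum g l.
Proof. induction l as [|a l IH]; simpl; [reflexivity|]. now rewrite IH. Qed.

Lemma sumR_map_filter_lsum {T} (P : T -> bool) (g : T -> R) l :
  sumR (map g (filter P l)) = lsum (fun a => if P a then g a else 0) l.
Proof.
  induction l as [|a l IH]; simpl; [reflexivity|].
  destruct (P a); simpl; rewrite IH; ring.
Qed.

Lemma lsum_app {T} (g : T -> R) l1 l2 : lsum g (l1 ++ l2) = lsum g l1 + lsum g l2.
Proof. induction l1 as [|a l IH]; simpl; [ring|]. rewrite IH; ring. Qed.

Lemma lsum_map {T U} (g : U -> R) (h : T -> U) l :
  lsum g (map h l) = lsum (fun a => g (h a)) l.
Proof. induction l as [|a l IH]; simpl; [reflexivity|]. now rewrite IH. Qed.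

Lemma lsum_ext {T} (g h : T -> R) l :
  (forall a, In a l -> g a = h a) -> lsum g l = lsum h l.
Proof.
  induction l as [|a l IH]; simpl; intros H; [reflexivity|].
  rewrite H, IH by auto; reflexivity.
Qed.

Lemma lsum_le {T} (g h : T -> R) l :
  (forall a, In a l -> g a <= h a) -> lsum g l <= lsum h l.
Proof.
  induction l as [|a l IH]; simpl; intros H; [lra|].
  assert (lsum g l <= lsum h l) by (apply IH; auto).
  specialize (H a (or_introl eq_refl)); lra.
Qed.

Lemma lsum_nonneg {T} (g : T -> R) l : (forall a, In a l -> 0 <= g a) -> 0 <= lsum g l.
Proof.
  induction l as [|a l IH]; simpl; intros H; [lra|].
  assert (0 <= lsum g l) by (apply IH; auto).
  specialize (H a (or_introl eq_refl)); lra.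
Qed.

Lemma lsum_lin {T} (al be : R) (g h : T -> R) l :
  lsum (fun a => al * g a + be * h a) l = al * lsum g l + be * lsum h l.
Proof. induction l as [|a l IH]; simpl; [ring|]. rewrite IH; ring. Qed.

Lemma lsum_scal_l {T} (c : R) (g : T -> R) l : lsum (fun a => c * g a) l = c * lsum g l.
Proof. induction l as [|a l IH]; simpl; [ring|]. rewrite IH; ring. Qed.

Lemma lsum_list_prod {T U} (g : T -> R) (h : U -> R) l1 l2 :
  lsum (fun p => g (fst p) * h (snd p)) (list_prod l1 l2) = lsum g l1 * lsum h l2.
Proof.
  induction l1 as [|a l IH]; simpl; [ring|].
  rewrite lsum_app, lsum_map, IH; simpl.
  rewrite lsum_scal_l; ring.
Qed.

(* An entry of the k-fold tensor power: instead of the k outputs we only record how many are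
   true and how many are false, which is all the majority vote needs. *)
Record tensor_entry := mkTensorEntry
  { n_true : nat; n_false : nat; rows : nat -> bool; cols : nat -> bool; weight : R }.

Definition unit_entry : tensor_entry := mkTensorEntry 0 0 (fun _ => true) (fun _ => true) 1.

Definition extend (s : tensor_entry) (e : entry) : tensor_entry :=
  let '(z, A, B, w) := e in
  mkTensorEntry (n_true s + (if z then 1 else 0)) (n_false s + (if z then 0 else 1))
    (fun x => rows s x && A x) (fun y => cols s y && B y) (weight s * w).

Fixpoint tensor_power (sol : list entry) (k : nat) : list tensor_entry :=
  match k with
  | O => unit_entry :: nil
  | S k => map (fun p => extend (fst p) (snd p)) (list_prod (tensor_power sol k) sol)
  end.

(* Ties go to output [false]. *)
Definition majority (s : tensor_entry) : entry :=
  (Nat.ltb (n_false s) (n_true s), rows s, cols s, weight s).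

Definition amplify (sol : list entry) (k : nat) : list entry := map majority (tensor_power sol k).

Lemma lsum_tensor_power (g : tensor_entry -> R) (h : entry -> R) sol k :
  g unit_entry = 1 -> (forall s e, g (extend s e) = g s * h e) ->
  lsum g (tensor_power sol k) = lsum h sol ^ k.
Proof.
  intros Hunit Hext. induction k as [|k IH]; simpl; [rewrite Hunit; ring|].
  rewrite lsum_map, (lsum_ext _ (fun p => g (fst p) * h (snd p))) by (intros; apply Hext).
  rewrite lsum_list_prod, IH; ring.
Qed.

Lemma tensor_power_weight_nonneg sol k :
  (forall e, In e sol -> 0 <= ent_w e) -> forall s, In s (tensor_power sol k) -> 0 <= weight s.
Proof.
  intros Hsol. induction k as [|k IH]; simpl; intros s Hs.
  - destruct Hs as [<-|[]]; simpl; lra.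
  - apply in_map_iff in Hs as [[s' [[[z A] B] w]] [<- Hin]].
    apply in_prod_iff in Hin as [Hs' He]; simpl.
    apply Rmult_le_pos; [now apply IH | exact (Hsol _ He)].
Qed.

Lemma value_amplify sol k : value (amplify sol k) = value sol ^ k.
Proof.
  unfold value, amplify. rewrite !sumR_map_lsum, lsum_map.
  apply lsum_tensor_power; [reflexivity|]. now intros s [[[z A] B] w].
Qed.

Lemma le_mul_pow2_pow_half (w : R) (m n : nat) :
  0 <= w -> (m <= n)%nat -> w <= w * 2 ^ n * (/ 2) ^ m.
Proof.
  intros Hw Hmn. replace n with ((n - m) + m)%nat by lia.
  rewrite pow_add, !Rmult_assoc, <- Rpow_mult_distr, Rinv_r, pow1, Rmult_1_r by lra.
  assert (1 <= 2 ^ (n - m)) by (apply pow_R1_Rle; lra).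
  rewrite <- (Rmult_1_r w) at 1. now apply Rmult_le_compat_l.
Qed.

Section AtPoint.
Variables (x y : nat) (b : bool).

Definition ent_cover (e : entry) : R := if ent_in e x y then ent_w e else 0.
Definition ent_correct (e : entry) : R :=
  if ent_in e x y && Bool.eqb (ent_out e) b then ent_w e else 0.
Definition ent_potential (e : entry) : R :=
  if ent_in e x y then ent_w e * (if Bool.eqb (ent_out e) b then / 2 else 2) else 0.

Definition covers (s : tensor_entry) : bool := rows s x && cols s y.
Definition n_right (s : tensor_entry) : nat := if b then n_true s else n_false s.
Definition n_wrong (s : tensor_entry) : nat := if b then n_false s else n_true s.

Definition tensor_cover (s : tensor_entry) : R := if covers s then weight s else 0.
Definition tensor_correct (s : tensor_entry) : R :=
  if covers s && Bool.eqb (ent_out (majority s)) b then weight s else 0.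
Definition tensor_potential (s : tensor_entry) : R :=
  if covers s then weight s * 2 ^ n_wrong s * (/ 2) ^ n_right s else 0.

Lemma tensor_cover_extend s e : tensor_cover (extend s e) = tensor_cover s * ent_cover e.
Proof.
  destruct e as [[[z A] B] w]; unfold tensor_cover, ent_cover, covers; simpl.
  destruct (rows s x), (cols s y), (A x), (B y); simpl; ring.
Qed.

Lemma tensor_potential_extend s e :
  tensor_potential (extend s e) = tensor_potential s * ent_potential e.
Proof.
  destruct e as [[[z A] B] w]; unfold tensor_potential, ent_potential, covers, n_wrong, n_right.
  simpl. destruct (rows s x), (cols s y), (A x), (B y); simpl; try ring;
  destruct z, b; simpl; rewrite ?Nat.add_0_r, ?pow_add; simpl; field.
Qed.

Lemma tensor_potential_unit : tensor_potential unit_entry = 1.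
Proof. unfold tensor_potential, n_wrong, n_right; simpl. destruct b; simpl; ring. Qed.

Lemma ent_potential_lin e : ent_potential e = 2 * ent_cover e + (- 3 / 2) * ent_correct e.
Proof.
  destruct e as [[[z A] B] w]; unfold ent_potential, ent_cover, ent_correct; simpl.
  destruct (A x), (B y), z, b; simpl; field.
Qed.

(* A wrong majority has at least as many wrong as right coordinates, so its potential is at
   least its weight: the potential dominates the error, as in Markov's inequality. *)
Lemma tensor_error_le_potential s :
  0 <= weight s -> tensor_cover s - tensor_correct s <= tensor_potential s.
Proof.
  intros Hw. unfold tensor_cover, tensor_correct, tensor_potential, n_wrong, n_right, majority.
  simpl. destruct (covers s); simpl; [|lra].
  assert (0 <= weight s * 2 ^ (if b then n_false s else n_true s)
                        * (/ 2) ^ (if b then n_true s else n_false s))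
    by (apply Rmult_le_pos; [apply Rmult_le_pos|]; auto; apply pow_le; lra).
  destruct b, (Nat.ltb (n_false s) (n_true s)) eqn:E; simpl; try lra;
    [apply Nat.ltb_ge in E | apply Nat.ltb_lt in E];
    (eapply Rle_trans; [|apply le_mul_pow2_pow_half; [exact Hw | lia]]); lra.
Qed.

End AtPoint.

Lemma cover_lsum sol x y : cover sol x y = lsum (ent_cover x y) sol.
Proof. unfold cover. now rewrite sumR_map_filter_lsum. Qed.

Lemma correct_lsum f sol x y : correct f sol x y = lsum (ent_correct x y (f x y)) sol.
Proof. unfold correct. now rewrite sumR_map_filter_lsum. Qed.

Lemma cover_map_majority L x y : cover (map majority L) x y = lsum (tensor_cover x y) L.
Proof. unfold cover. now rewrite sumR_map_filter_lsum, lsum_map. Qed.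

Lemma correct_map_majority f L x y :
  correct f (map majority L) x y = lsum (tensor_correct x y (f x y)) L.
Proof. unfold correct. now rewrite sumR_map_filter_lsum, lsum_map. Qed.

Lemma amplify_feasible eps delta nX nY f sol k :
  feasible eps nX nY f sol -> ((1 + 3 * eps) / 2) ^ k <= delta ->
  feasible delta nX nY f (amplify sol k).
Proof.
  intros [Hnonneg Hpoint] Hk.
  pose proof (tensor_power_weight_nonneg sol k Hnonneg) as HP.
  split.
  - intros e He. apply in_map_iff in He as [s [<- Hs]]. exact (HP s Hs).
  - intros x y Hx Hy. destruct (Hpoint x y Hx Hy) as [Hcorrect Hcover].
    rewrite correct_lsum in Hcorrect. rewrite cover_lsum in Hcover.
    unfold amplify. rewrite correct_map_majority, cover_map_majority.
    assert (Hcov : lsum (tensor_cover x y) (tensor_power sol k) = 1).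
    { rewrite (lsum_tensor_power _ (ent_cover x y)), Hcover.
      - apply pow1.
      - reflexivity.
      - apply tensor_cover_extend. }
    assert (Hrate : 0 <= lsum (ent_potential x y (f x y)) sol <= (1 + 3 * eps) / 2).
    { split.
      - apply lsum_nonneg. intros e He. unfold ent_potential.
        destruct (ent_in e x y); [|lra].
        apply Rmult_le_pos; [now apply Hnonneg | destruct (Bool.eqb _ _); lra].
      - rewrite (lsum_ext _ _ _ (fun e _ => ent_potential_lin x y (f x y) e)), lsum_lin.
        lra. }
    assert (Hpot : lsum (tensor_potential x y (f x y)) (tensor_power sol k)
                   <= ((1 + 3 * eps) / 2) ^ k).
    { rewrite (lsum_tensor_power _ (ent_potential x y (f x y))).
      - now apply pow_incr.
      - apply tensor_potential_unit.
      - apply tensor_potential_extend. }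
    assert (Herr : lsum (fun s => 1 * tensor_cover x y s + -1 * tensor_correct x y (f x y) s)
                     (tensor_power sol k)
                   <= lsum (tensor_potential x y (f x y)) (tensor_power sol k)).
    { apply lsum_le. intros s Hs.
      pose proof (tensor_error_le_potential x y (f x y) s (HP s Hs)); lra. }
    rewrite lsum_lin, Hcov in Herr. split; [lra | exact Hcov].
Qed.

Lemma feasible_value_ge1 eps nX nY f sol :
  (0 < nX)%nat -> (0 < nY)%nat -> feasible eps nX nY f sol -> 1 <= value sol.
Proof.
  intros HX HY [Hnonneg Hpoint]. destruct (Hpoint 0%nat 0%nat HX HY) as [_ Hcover].
  rewrite cover_lsum in Hcover. unfold value.
  rewrite sumR_map_lsum, <- Hcover. apply lsum_le. intros e He.
  unfold ent_cover. destruct (ent_in e 0 0); [lra | now apply Hnonneg].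
Qed.

Lemma prt_ge1 eps nX nY f v :
  (0 < nX)%nat -> (0 < nY)%nat -> is_prt eps nX nY f v -> 1 <= v.
Proof.
  intros HX HY [_ Hgreatest]. apply Hgreatest. intros u [sol [Hsol <-]].
  exact (feasible_value_ge1 _ _ _ _ _ HX HY Hsol).
Qed.

Lemma ln_le a b : 0 < a -> a <= b -> ln a <= ln b.
Proof.
  intros Ha [Hlt|<-]; [left; now apply ln_increasing | lra].
Qed.

(* The k-th root exp (ln p / k) of prt_δ is a lower bound for the values of all ε-feasible
   solutions, hence for their infimum. *)
Lemma ln_prt_le_amplified eps delta nX nY f p q k :
  (0 < nX)%nat -> (0 < nY)%nat -> (0 < k)%nat ->
  ((1 + 3 * eps) / 2) ^ k <= delta ->
  is_prt delta nX nY f p -> is_prt eps nX nY f q ->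
  ln p <= INR k * ln q.
Proof.
  intros HX HY Hk Hrate Hp Hq.
  assert (Hp1 : 1 <= p) by exact (prt_ge1 _ _ _ _ _ HX HY Hp).
  assert (Hkpos : 0 < INR k) by (apply lt_0_INR; lia).
  assert (Hroot : forall sol, feasible eps nX nY f sol -> exp (ln p / INR k) <= value sol).
  { intros sol Hsol. pose proof (feasible_value_ge1 _ _ _ _ _ HX HY Hsol) as Hv.
    assert (Hpv : p <= value sol ^ k).
    { rewrite <- value_amplify. apply (proj1 Hp).
      exists (amplify sol k). split; [now apply amplify_feasible with eps | reflexivity]. }
    apply ln_le in Hpv; [|lra]. rewrite ln_pow in Hpv by lra.
    assert (Hroot_ln : ln p / INR k <= ln (value sol)).
    { apply Rmult_le_reg_r with (INR k); [exact Hkpos|].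
      unfold Rdiv. rewrite Rmult_assoc, Rinv_l by lra. lra. }
    rewrite <- (exp_ln (value sol)) by lra.
    destruct Hroot_ln as [Hlt|Heq]; [left; now apply exp_increasing | rewrite Heq; right; reflexivity]. }
  assert (Hq' : exp (ln p / INR k) <= q).
  { apply (proj2 Hq). intros u [sol [Hsol <-]]. now apply Hroot. }
  apply ln_le in Hq'; [|apply exp_pos]. rewrite ln_exp in Hq'.
  apply Rmult_le_reg_r with (/ INR k); [now apply Rinv_0_lt_compat|].
  replace (INR k * ln q * / INR k) with (ln q) by (field; lra). exact Hq'.
Qed.

Lemma half_pow_le_exists delta :
  0 < delta < 1 / 2 ->
  exists m : nat, (0 < m)%nat /\ (/ 2) ^ m <= delta /\ INR m <= 2 * log2 (1 / delta).
Proof.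
  intros Hd.
  assert (Hln2 : 0 < ln 2) by (rewrite <- ln_1; apply ln_increasing; lra).
  set (L := log2 (1 / delta)).
  assert (HL : L * ln 2 = - ln delta).
  { unfold L, log2, Rdiv. rewrite Rmult_1_l, ln_Rinv by lra. field. lra. }
  assert (HL1 : 1 < L).
  { assert (ln 2 < ln (/ delta)) by (apply ln_increasing; [lra|];
      apply Rmult_lt_reg_r with delta; [lra|]; rewrite Rinv_l; lra).
    rewrite ln_Rinv in H by lra. nra. }
  destruct (archimed L) as [Hup1 Hup2].
  assert (Hup : (0 <= up L)%Z) by (apply Z.lt_le_incl, lt_0_IZR; lra).
  exists (Z.to_nat (up L)).
  assert (Hm : INR (Z.to_nat (up L)) = IZR (up L))
    by (rewrite INR_IZR_INZ, Z2Nat.id; auto).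
  repeat split.
  - apply INR_lt. rewrite Hm. simpl. lra.
  - apply Rnot_lt_le. intros Hlt.
    apply ln_increasing in Hlt; [|lra].
    rewrite ln_pow, ln_Rinv, Hm in Hlt by lra. nra.
  - rewrite Hm. lra.
Qed.

Theorem mainTheorem9 :
  exists C : R,
    forall (nX nY : nat) (f : nat -> nat -> bool) (delta : R),
      (0 < nX)%nat -> (0 < nY)%nat ->
      0 < delta < 1/8 ->
      forall p q : R,
        is_prt delta nX nY f p ->
        is_prt (1/8) nX nY f q ->
        log2 p <= C * log2 (1 / delta) * log2 q.
Proof.
  exists 4. intros nX nY f delta HX HY Hd p q Hp Hq.
  destruct (half_pow_le_exists delta) as [m [Hm [Hhalf HmL]]]; [lra|].
  assert (Hrate : ((1 + 3 * (1 / 8)) / 2) ^ (2 * m) <= delta).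
  { rewrite pow_mult. apply Rle_trans with ((/ 2) ^ m); [apply pow_incr; lra | exact Hhalf]. }
  pose proof (ln_prt_le_amplified _ _ _ _ _ _ _ (2 * m) HX HY ltac:(lia) Hrate Hp Hq) as Hlog.
  assert (Hln2 : 0 < ln 2) by (rewrite <- ln_1; apply ln_increasing; lra).
  assert (Hq0 : 0 <= log2 q).
  { unfold log2, Rdiv. apply Rmult_le_pos; [|left; now apply Rinv_0_lt_compat].
    rewrite <- ln_1. apply ln_le; [lra | exact (prt_ge1 _ _ _ _ _ HX HY Hq)]. }
  assert (Hlog2 : log2 p <= INR (2 * m) * log2 q).
  { unfold log2, Rdiv. rewrite <- Rmult_assoc.
    apply Rmult_le_compat_r; [left; now apply Rinv_0_lt_compat | exact Hlog]. }
  rewrite mult_INR in Hlog2. simpl in Hlog2. nra.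
Qed.
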